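(* Let $\mathcal{R}$ be a left-connected rewriting system over a signature $\Sigma$, let $L_i, L_j$ be left-hand sides of rules of $\mathcal{R}$, let $S_{ij\gamma}$ (with $\epsilon_{ij\gamma}\colon L_i+L_j\to S_{ij\gamma}$) be a hyperedge gluing and $S_{ij\gamma'}$ (with $\epsilon_{ij\gamma'}\colon S_{ij\gamma}\to S_{ij\gamma'}$) a subsequent node gluing, as described below. If $S_{ij\gamma'}$ yields a critical pair, then $S_{ij\gamma}$ yields a critical pair as well.
   Context: A signature $\Sigma$ is a set of triples $(x,n,m)$ (label, arity, coarity). A $\Sigma$-hypergraph $G=(V,E,s,t,l)$ has finite sets $V$ (nodes), $E$ (hyperedges), maps $s,t\colon E\to V^*$ (lists of sources/targets) and a labelling $l\colon E\to\Sigma$ sending a hyperedge with $n$ sources and $m$ targets to some $(x,n,m)$. Morphisms preserve sources, targets and labels; they form the category $\mathbf{Hyp}_\Sigma$, where colimits are computed componentwise and monos/epis are injective/surjective on nodes and hyperedges. Composition is written $f;g$; $\iota_1,\iota_2$ are coprojections. A hypergraph is discrete if it has no hyperedges. A path is a list of hyperedges $[e_1,\dots,e_n]$ with some target of $e_k$ equal to a source of $e_{k+1}$ for each $k$; it goes from $v$ to $v'$ if $v$ is a source of $e_1$ and $v'$ a target of $e_n$; a cycle is a path with some source of $e_1$ a target of $e_n$. In-degree (out-degree) of a node $v$: number of pairs $(e,i)$ with $v$ the $i$-th target (source) of $e$; $in(H)$, $out(H)$: nodes of in-degree $0$, out-degree $0$. $H$ is ma (monogamous acyclic) if it has no cycle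 and all in- and out-degrees are $\le 1$. A cospan $I\to H\leftarrow O$ with $I,O$ discrete is an ma-cospan if $H$ is ma and the legs are mono with images $in(H)$ and $out(H)$. $H$ is strongly connected if for all $x\in in(H)$, $y\in out(H)$ there is a path from $x$ to $y$. A left-connected rule is a span $L\xleftarrow{[i_L,o_L]}K=I+O\xrightarrow{[i_R,o_R]}R$ with $I,O$ discrete, $I\to L\leftarrow O$, $I\to R\leftarrow O$ ma-cospans, $[i_L,o_L]$ mono, $L$ strongly connected; a left-connected rewriting system is a finite set of such rules. Derivations (convex DPO rewriting with interface) between ma-cospans are given by a rule, a convex match (a mono whose image contains every hyperedge on every path between two of its nodes) and a double pushout diagram commuting with the interface; for left-connected systems they are determined by a rule and a mono match. A pre-critical pair is a pair of derivations from a common ma-cospan $n\to S\leftarrow m$ with matches $m_1\colon L_i\to S$, $m_2\colon L_j\to S$ such that $[m_1,m_2]$ is epi; it is parallel if $m_1$ factors through the pushout complement $C_2\to S$ of the second derivation and $m_2$ factors through the pushout complement $C_1\to S$ of the first; it is critical if not parallel. Hyperedge gluing: let $M$ be a nonempty set of pairs $(e,e')$, $e$ a hyperedge of $L_i$, $e'$ a hyperedge of $L_j$, with equal labels, no hyperedge occurring in two pairs; let $\gamma$ be the hypergraph with hyperedges $M$ and nodes the pairs $(v,v')$ that are $k$-th sources (or $k$-th targets) of $e,e'$ for some $(e,e')\in M$ and $k$, with projections $p_1^\gamma\colon\gamma\to L_i$, $p_2^\gamma\colon\gamma\to L_j$; $\epsilon_{ij\gamma}\colon L_i+L_j\to S_{ij\gamma}$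 is the coequaliser of $p_1^\gamma;\iota_1$ and $p_2^\gamma;\iota_2$. Node gluing: let $I_1=in(S_{ij\gamma})\cap\epsilon_{ij\gamma}(\iota_1(in(L_i)))$, $I_2=in(S_{ij\gamma})\cap\epsilon_{ij\gamma}(\iota_2(in(L_j)))$, $O_1=out(S_{ij\gamma})\cap\epsilon_{ij\gamma}(\iota_1(out(L_i)))$, $O_2=out(S_{ij\gamma})\cap\epsilon_{ij\gamma}(\iota_2(out(L_j)))$; let $N$ be a set of pairs in $I_1\times O_2$, or a set of pairs in $I_2\times O_1$, with no element occurring in two pairs; $\gamma'$ is the discrete hypergraph with nodes $N$ and projections $p_1^{\gamma'},p_2^{\gamma'}\colon\gamma'\to S_{ij\gamma}$, and $\epsilon_{ij\gamma'}\colon S_{ij\gamma}\to S_{ij\gamma'}$ is their coequaliser. $S_{ij\gamma}$ yields a critical pair if $\iota_1;\epsilon_{ij\gamma}$, $\iota_2;\epsilon_{ij\gamma}$ are mono, $in(S_{ij\gamma})\xrightarrow{\subseteq}S_{ij\gamma}\xleftarrow{\subseteq}out(S_{ij\gamma})$ is an ma-cospan, and the derivations from it with these matches form a critical pair; likewise for $S_{ij\gamma'}$ with the matches $\iota_k;\epsilon_{ij\gamma};\epsilon_{ij\gamma'}$. *)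

From Stdlib Require List.
From mathcomp Require Import all_boot.
Set Implicit Arguments. Unset Strict Implicit. Unset Printing Implicit Defensive.

Record signature := Signature {
  slabel : Type;
  smem : slabel -> nat -> nat -> Prop }.

(* Sigma-hypergraphs.  A hyperedge e is labelled by the triple
   (lab e, size (src e), size (tgt e)), which must belong to Sigma. *)
Record hyp (Sg : signature) := Hyp {
  node : finType;
  edge : finType;
  src : edge -> seq node;
  tgt : edge -> seq node;
  lab : edge -> slabel Sg;
  labP : forall e, smem (lab e) (size (src e)) (size (tgt e)) }.
Arguments node {Sg}. Arguments edge {Sg}. Arguments src {Sg G} e : rename.
Arguments tgt {Sg G} e : rename. Arguments lab {Sg G} e : rename.

Section Hyp.
Variable Sg : signature.
Notation hyp := (hyp Sg).

Record hom (G H : hyp) := Hom {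
  hV : node G -> node H;
  hE : edge G -> edge H;
  hsrc : forall e, src (hE e) = map hV (src e);
  htgt : forall e, tgt (hE e) = map hV (tgt e);
  hlab : forall e, lab (hE e) = lab e }.

Section Comp.
Variables (G H K : hyp) (f : hom G H) (g : hom H K).
Lemma comp_src e : src (hE g (hE f e)) = map (fun v => hV g (hV f v)) (src e).
Proof. by rewrite !hsrc -map_comp. Qed.
Lemma comp_tgt e : tgt (hE g (hE f e)) = map (fun v => hV g (hV f v)) (tgt e).
Proof. by rewrite !htgt -map_comp. Qed.
Lemma comp_lab e : lab (hE g (hE f e)) = lab e.
Proof. by rewrite !hlab. Qed.
Definition hcomp : hom G K :=
  @Hom G K (fun v => hV g (hV f v)) (fun e => hE g (hE f e)) comp_src comp_tgt comp_lab.
End Comp.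

Definition heq (G H : hyp) (f g : hom G H) : Prop :=
  (forall v, hV f v = hV g v) /\ (forall e, hE f e = hE g e).

Definition mono (G H : hyp) (f : hom G H) : Prop :=
  injective (hV f) /\ injective (hE f).
Definition epi (G H : hyp) (f : hom G H) : Prop :=
  (forall v, exists x, hV f x = v) /\ (forall e, exists x, hE f x = e).

Definition cp_src (G H : hyp) (e : (edge G + edge H)%type) :
    seq (node G + node H)%type :=
  match e with inl e => map inl (src e) | inr e => map inr (src e) end.
Definition cp_tgt (G H : hyp) (e : (edge G + edge H)%type) :
    seq (node G + node H)%type :=
  match e with inl e => map inl (tgt e) | inr e => map inr (tgt e) end.
Definition cp_lab (G H : hyp) (e : (edge G + edge H)%type) : slabel Sg :=
  match e with inl e => lab e | inr e => lab e end.
Lemma cp_labP (G H : hyp) e :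
  smem (cp_lab e) (size (@cp_src G H e)) (size (@cp_tgt G H e)).
Proof. by case: e => e /=; rewrite !size_map; apply: labP. Qed.
Definition coprod (G H : hyp) : hyp :=
  @Hyp Sg (node G + node H)%type (edge G + edge H)%type
    (@cp_src G H) (@cp_tgt G H) (@cp_lab G H) (@cp_labP G H).

Definition inj1 (G H : hyp) : hom G (coprod G H) :=
  @Hom G (coprod G H) inl inl (fun _ => erefl) (fun _ => erefl) (fun _ => erefl).
Definition inj2 (G H : hyp) : hom H (coprod G H) :=
  @Hom H (coprod G H) inr inr (fun _ => erefl) (fun _ => erefl) (fun _ => erefl).

Section Copair.
Variables (G H K : hyp) (f : hom G K) (g : hom H K).
Definition cpV (v : node (coprod G H)) : node K :=
  match v with inl a => hV f a | inr b => hV g b end.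
Definition cpE (e : edge (coprod G H)) : edge K :=
  match e with inl a => hE f a | inr b => hE g b end.
Lemma cpE_src e : src (cpE e) = map cpV (src e).
Proof. by case: e => e /=; rewrite hsrc -map_comp. Qed.
Lemma cpE_tgt e : tgt (cpE e) = map cpV (tgt e).
Proof. by case: e => e /=; rewrite htgt -map_comp. Qed.
Lemma cpE_lab e : lab (cpE e) = lab e.
Proof. by case: e => e /=; rewrite hlab. Qed.
Definition copair : hom (coprod G H) K := @Hom (coprod G H) K cpV cpE cpE_src cpE_tgt cpE_lab.
End Copair.

Definition is_coeq (A B Q : hyp) (f g : hom A B) (q : hom B Q) : Prop :=
  heq (hcomp f q) (hcomp g q) /\
  forall (X : hyp) (h : hom B X), heq (hcomp f h) (hcomp g h) ->
    exists u : hom Q X, heq (hcomp q u) h /\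
      forall u' : hom Q X, heq (hcomp q u') h -> heq u' u.

Definition is_pushout (A B C D : hyp) (f : hom A B) (g : hom A C)
    (p : hom B D) (q : hom C D) : Prop :=
  heq (hcomp f p) (hcomp g q) /\
  forall (X : hyp) (h : hom B X) (k : hom C X), heq (hcomp f h) (hcomp g k) ->
    exists u : hom D X, heq (hcomp p u) h /\ heq (hcomp q u) k /\
      forall u' : hom D X, heq (hcomp p u') h -> heq (hcomp q u') k -> heq u' u.

Definition discrete (G : hyp) : Prop := #|edge G| = 0.

Definition void_src (T : finType) (e : void) : seq T := match e with end.
Definition void_lab (e : void) : slabel Sg := match e with end.
Lemma void_labP (T : finType) (e : void) :
  smem (void_lab e) (size (void_src T e)) (size (void_src T e)).
Proof. by case: e. Qed.
Definition disc (T : finType) : hyp :=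
  @Hyp Sg T void (@void_src T) (@void_src T) void_lab (@void_labP T).
Definition disc_hom (T : finType) (G : hyp) (f : T -> node G) : hom (disc T) G :=
  @Hom (disc T) G f (fun e => match e with end)
    (fun e => match e with end) (fun e => match e with end)
    (fun e => match e with end).

Definition indeg (G : hyp) (v : node G) : nat :=
  \sum_(e : edge G) count (pred1 v) (tgt e).
Definition outdeg (G : hyp) (v : node G) : nat :=
  \sum_(e : edge G) count (pred1 v) (src e).
Definition inset (G : hyp) : {set node G} := [set v | indeg v == 0].
Definition outset (G : hyp) : {set node G} := [set v | outdeg v == 0].

Definition linked (G : hyp) (e e' : edge G) : bool :=
  has (fun v => v \in src e') (tgt e).
Definition hpath_from_to (G : hyp) (p : seq (edge G)) (v v' : node G) : bool :=
  match p with
  | [::] => false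
  | e :: p' => [&& path (@linked G) e p', v \in src e & v' \in tgt (last e p')]
  end.
Definition acyclic (G : hyp) : Prop := forall p v, ~~ @hpath_from_to G p v v.
Definition is_ma (G : hyp) : Prop :=
  acyclic G /\ forall v : node G, indeg v <= 1 /\ outdeg v <= 1.

Definition ma_cospan (I O H : hyp) (i : hom I H) (o : hom O H) : Prop :=
  [/\ discrete I, discrete O, is_ma H, mono i & mono o] /\
  (forall v, v \in inset H <-> exists x, hV i x = v) /\
  (forall v, v \in outset H <-> exists x, hV o x = v).

Definition strongly_connected (G : hyp) : Prop :=
  forall x y, x \in inset G -> y \in outset G -> exists p, @hpath_from_to G p x y.

(* Rules  L <-[iL,oL]- I+O -[iR,oR]-> R. *)
Record rule := Rule {
  rI : hyp; rO : hyp; rL : hyp; rR : hyp;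
  riL : hom rI rL; roL : hom rO rL; riR : hom rI rR; roR : hom rO rR }.

Definition left_connected_rule (r : rule) : Prop :=
  [/\ discrete (rI r), discrete (rO r), ma_cospan (riL r) (roL r),
      ma_cospan (riR r) (roR r) & mono (copair (riL r) (roL r))] /\
  strongly_connected (rL r).

Definition left_connected_system (rs : seq rule) : Prop :=
  forall r, Stdlib.Lists.List.In r rs -> left_connected_rule r.

Definition convex_match (L G : hyp) (m : hom L G) : Prop :=
  mono m /\
  forall (x y : node L) (p : seq (edge G)),
    hpath_from_to p (hV m x) (hV m y) ->
    forall e, e \in p -> exists e0, hE m e0 = e.

Record derivation (n m S : hyp) (iS : hom n S) (oS : hom m S)
    (r : rule) (mt : hom (rL r) S) := Derivation {
  dC : hyp;
  dk : hom (coprod (rI r) (rO r)) dC;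
  dc : hom dC S;
  dT : hyp;
  dr : hom (rR r) dT;
  dd : hom dC dT;
  dn : hom n dC;
  dm : hom m dC;
  d_convex : convex_match mt;
  d_po1 : is_pushout (copair (riL r) (roL r)) dk mt dc;
  d_po2 : is_pushout (copair (riR r) (roR r)) dk dr dd;
  d_n : heq (hcomp dn dc) iS;
  d_m : heq (hcomp dm dc) oS }.

(* Pre-critical pair that is not parallel. *)
Definition critical_pair (n m S : hyp) (iS : hom n S) (oS : hom m S)
    (r1 : rule) (m1 : hom (rL r1) S) (r2 : rule) (m2 : hom (rL r2) S) : Prop :=
  ma_cospan iS oS /\ epi (copair m1 m2) /\
  exists (D1 : derivation iS oS m1) (D2 : derivation iS oS m2),
    ~ ((exists u : hom (rL r1) (dC D2), heq (hcomp u (dc D2)) m1) /\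
       (exists u : hom (rL r2) (dC D1), heq (hcomp u (dc D1)) m2)).

Definition in_incl (S : hyp) : hom (disc {v : node S | v \in inset S}) S :=
  disc_hom (fun v => val v).
Definition out_incl (S : hyp) : hom (disc {v : node S | v \in outset S}) S :=
  disc_hom (fun v => val v).
Definition yields_cp (r1 r2 : rule) (S : hyp)
    (m1 : hom (rL r1) S) (m2 : hom (rL r2) S) : Prop :=
  [/\ mono m1, mono m2, ma_cospan (in_incl S) (out_incl S)
    & critical_pair (in_incl S) (out_incl S) m1 m2].

Definition valid_edge_gluing (L1 L2 : hyp) (M : {set edge L1 * edge L2}) : Prop :=
  [/\ M != set0,
      (forall x, x \in M -> [/\ lab x.1 = lab x.2,
                                size (src x.1) = size (src x.2) &
                                size (tgt x.1) = size (tgt x.2)]) &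
      (forall x y, x \in M -> y \in M -> x <> y -> x.1 <> y.1 /\ x.2 <> y.2)].

Section Gamma.
Variables (L1 L2 : hyp) (M : {set edge L1 * edge L2}).
Hypothesis HM : valid_edge_gluing M.

Definition gnode (p : node L1 * node L2) : bool :=
  [exists x in M, (p \in zip (src x.1) (src x.2)) || (p \in zip (tgt x.1) (tgt x.2))].
Definition gV := {p : node L1 * node L2 | gnode p}.
Definition gE := {x : edge L1 * edge L2 | x \in M}.
Definition g_src (x : gE) : seq gV :=
  pmap (insub : _ -> option gV) (zip (src (val x).1) (src (val x).2)).
Definition g_tgt (x : gE) : seq gV :=
  pmap (insub : _ -> option gV) (zip (tgt (val x).1) (tgt (val x).2)).
Definition g_lab (x : gE) : slabel Sg := lab (val x).1.

Lemma map_val_pmap_insub (s : seq (node L1 * node L2)) :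
  map val (pmap (insub : _ -> option gV) s) = filter gnode s.
Proof.
elim: s => //= a s IH; case: insubP => [u Pu Eu|Pa] /=.
  by rewrite Pu -Eu IH.
by rewrite (negbTE Pa).
Qed.

Lemma g_src_val x : map val (g_src x) = zip (src (val x).1) (src (val x).2).
Proof.
rewrite map_val_pmap_insub; apply/all_filterP/allP => p Hp.
by apply/existsP; exists (val x); rewrite (valP x) Hp.
Qed.
Lemma g_tgt_val x : map val (g_tgt x) = zip (tgt (val x).1) (tgt (val x).2).
Proof.
rewrite map_val_pmap_insub; apply/all_filterP/allP => p Hp.
by apply/existsP; exists (val x); rewrite (valP x) Hp orbT.
Qed.

Lemma g_labP x : smem (g_lab x) (size (g_src x)) (size (g_tgt x)).
Proof.
have [_ Hl _] := HM; have [_ Hs Ht] := Hl _ (valP x).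
rewrite -(size_map val (g_src x)) -(size_map val (g_tgt x)).
by rewrite g_src_val g_tgt_val !size_zip -Hs -Ht !minnn; apply: labP.
Qed.

Definition gamma : hyp := @Hyp Sg gV gE g_src g_tgt g_lab g_labP.

Lemma gp1_src (x : edge gamma) :
  src (val x).1 = map (fun p : gV => (val p).1) (src x).
Proof.
have [_ Hl _] := HM; have [_ Hs _] := Hl _ (valP x).
by rewrite (map_comp fst val) g_src_val -/(unzip1 _) unzip1_zip // Hs.
Qed.
Lemma gp1_tgt (x : edge gamma) :
  tgt (val x).1 = map (fun p : gV => (val p).1) (tgt x).
Proof.
have [_ Hl _] := HM; have [_ _ Ht] := Hl _ (valP x).
by rewrite (map_comp fst val) g_tgt_val -/(unzip1 _) unzip1_zip // Ht.
Qed.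
Lemma gp1_lab (x : edge gamma) : lab (val x).1 = lab x.
Proof. by []. Qed.
Definition gp1 : hom gamma L1 :=
  @Hom gamma L1 (fun p : gV => (val p).1) (fun x : gE => (val x).1)
    gp1_src gp1_tgt gp1_lab.

Lemma gp2_src (x : edge gamma) :
  src (val x).2 = map (fun p : gV => (val p).2) (src x).
Proof.
have [_ Hl _] := HM; have [_ Hs _] := Hl _ (valP x).
by rewrite (map_comp snd val) g_src_val -/(unzip2 _) unzip2_zip // Hs.
Qed.
Lemma gp2_tgt (x : edge gamma) :
  tgt (val x).2 = map (fun p : gV => (val p).2) (tgt x).
Proof.
have [_ Hl _] := HM; have [_ _ Ht] := Hl _ (valP x).
by rewrite (map_comp snd val) g_tgt_val -/(unzip2 _) unzip2_zip // Ht.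
Qed.
Lemma gp2_lab (x : edge gamma) : lab (val x).2 = lab x.
Proof. have [_ Hl _] := HM; have [Hlab _ _] := Hl _ (valP x). by rewrite -Hlab. Qed.
Definition gp2 : hom gamma L2 :=
  @Hom gamma L2 (fun p : gV => (val p).2) (fun x : gE => (val x).2)
    gp2_src gp2_tgt gp2_lab.
End Gamma.

Section NodeGluing.
Variables (L1 L2 S : hyp) (eps : hom (coprod L1 L2) S).
Definition glI1 : {set node S} :=
  inset S :&: [set hV eps (inl v) | v in inset L1].
Definition glI2 : {set node S} :=
  inset S :&: [set hV eps (inr v) | v in inset L2].
Definition glO1 : {set node S} :=
  outset S :&: [set hV eps (inl v) | v in outset L1].
Definition glO2 : {set node S} :=
  outset S :&: [set hV eps (inr v) | v in outset L2].
Definition valid_node_gluing (N : {set node S * node S}) : Prop :=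
  (N \subset setX glI1 glO2 \/ N \subset setX glI2 glO1) /\
  (forall p q, p \in N -> q \in N -> p <> q ->
     [/\ p.1 <> q.1, p.1 <> q.2, p.2 <> q.1 & p.2 <> q.2]).
End NodeGluing.

Definition gamma' (S : hyp) (N : {set node S * node S}) : hyp :=
  disc {p : node S * node S | p \in N}.
Definition gq1 (S : hyp) (N : {set node S * node S}) : hom (gamma' N) S :=
  disc_hom (fun p : {p : node S * node S | p \in N} => (val p).1).
Definition gq2 (S : hyp) (N : {set node S * node S}) : hom (gamma' N) S :=
  disc_hom (fun p : {p : node S * node S | p \in N} => (val p).2).
End Hyp.

From Stdlib Require List.
From mathcomp Require Import all_boot.
Set Implicit Arguments. Unset Strict Implicit. Unset Printing Implicit Defensive.

(* The quotient [q : S -> S'] of a node gluing is injective on hyperedges and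
   identifies two distinct nodes only if they are an input and an output of [S].
   Hence [S] inherits acyclicity and monogamy from [S'], the matches into [S] stay
   mono and convex, and every match into [S] has the canonical pushout complement
   ([S] minus the matched hyperedges and the matched non-interface nodes), which
   gives the two derivations.  If each match into [S] factored through the
   complement of the other, composing with [q] would give such factorisations in
   [S'] as well, since the nodes glued by [q] are boundary nodes and a matched
   boundary node is an interface node; so the pair in [S'] would be parallel. *)

Lemma count_pred1_map (T U : eqType) (f : T -> U) (v : T) (s : seq T) :
  count (pred1 v) s <= count (pred1 (f v)) (map f s).
Proof. by rewrite count_map; apply: sub_count => x /= /eqP ->. Qed.

Lemma leq_sum_inj (I J : finType) (h : I -> J) (F : J -> nat) :
  injective h -> \sum_(i : I) F (h i) <= \sum_(j : J) F j.
Proof.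
move=> h_inj; rewrite -(big_imset _ (in2W h_inj)) /=.
by rewrite [X in _ <= X](bigID [in [set h x | x in predT]]) leq_addr.
Qed.

Lemma sum_count_gt1 (E T : finType) (s : E -> seq T) (v : T) (e1 e2 : E) :
  e1 != e2 -> v \in s e1 -> v \in s e2 -> 1 < \sum_e count (pred1 v) (s e).
Proof.
move=> ne v1 v2; rewrite (bigD1 e1) // (bigD1 e2) 1?eq_sym //= addnA.
have pos i : v \in s i -> 0 < count (pred1 v) (s i) by rewrite -has_count has_pred1.
exact: leq_trans (leq_add (pos _ v1) (pos _ v2)) (leq_addr _ _).
Qed.

Lemma sum_count_neq0 (E T : finType) (s : E -> seq T) (v : T) :
  \sum_e count (pred1 v) (s e) != 0 -> exists e, v \in s e.
Proof.
by rewrite sum_nat_eq0 negb_forall => /existsP [e]; rewrite -lt0n -has_count has_pred1; exists e.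
Qed.

Lemma map_val_pmap_insub (T : eqType) (P : pred T) (sT : subType P) (s : seq T) :
  all P s -> map val (pmap (insub : T -> option sT) s) = s.
Proof.
by move=> sP; rewrite (pmap_filter (insubK _)) (eq_filter (isSome_insub _)); apply/all_filterP.
Qed.

Lemma connect_invariant (T : finType) (e : rel T) (U : Type) (F : T -> U) :
  (forall x y, e x y -> F x = F y) -> forall x y, connect e x y -> F x = F y.
Proof.
move=> F_e x y /connectP [s s_path ->]; elim: s x s_path => //= z s IHs x /andP [xz s_path].
by rewrite (F_e _ _ xz); apply: IHs.
Qed.

Lemma glue_maps (B C D : finType) (X : Type) (p : B -> D) (q : C -> D)
    (h : B -> X) (k : C -> X) :
  injective p -> injective q -> (forall d, (d \in codom p) || (d \in codom q)) ->
  (forall b c, p b = q c -> h b = k c) ->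
  exists u : D -> X, (forall b, u (p b) = h b) /\ (forall c, u (q c) = k c).
Proof.
move=> p_inj q_inj pq_cover hk.
pose hits d (x : B + C) := match x with inl b => p b == d | inr c => q c == d end.
pose hk' (x : B + C) := match x with inl b => h b | inr c => k c end.
have hitsP d : exists x, hits d x.
  by case/orP: (pq_cover d) => /codomP [y ->]; [exists (inl y) | exists (inr y)] => /=.
have hk'_wd d x y : hits d x -> hits d y -> hk' x = hk' y.
  case: x => [b|c]; case: y => [b'|c'] /= /eqP <- /eqP; first by move/p_inj->.
  - by move/esym/hk.
  - by move/hk->.
  - by move/q_inj->.
exists (fun d => hk' (xchoose (hitsP d))).
by split=> [b | c]; [apply: (hk'_wd _ _ (inl b)) | apply: (hk'_wd _ _ (inr c))];
  [exact: xchooseP | exact: eqxx | exact: xchooseP | exact: eqxx].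
Qed.

Definition extend_along (X Y Z : finType) (h : X -> Y) (k : X -> Z) (y : Y) : Z + Y :=
  if [pick x | h x == y] is Some x then inl (k x) else inr y.

Lemma extend_along_im (X Y Z : finType) (h : X -> Y) (k : X -> Z) :
  injective h -> forall x, extend_along h k (h x) = inl (k x).
Proof.
move=> h_inj x; rewrite /extend_along; case: pickP => [x' /eqP /h_inj -> // | no_x].
by have := no_x x; rewrite eqxx.
Qed.

Section SpanQuotient.
Variables (T X Y : finType) (fx : T -> X) (gy : T -> Y).

Definition span_rel : rel (X + Y) := fun x y =>
  [exists a, (x == inl (fx a)) && (y == inr (gy a)) || (y == inl (fx a)) && (x == inr (gy a))].

Lemma span_rel_sym : symmetric span_rel.
Proof. by move=> x y; apply/existsP/existsP => -[a xy]; exists a; rewrite orbC. Qed.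

Definition span_quot := {x : X + Y | root span_rel x == x}.

Definition to_quot (x : X + Y) : span_quot :=
  exist _ (root span_rel x) (introT eqP (root_root (sym_connect_sym span_rel_sym) x)).

Lemma to_quot_span a : to_quot (inl (fx a)) = to_quot (inr (gy a)).
Proof.
apply: val_inj; apply/(rootP (sym_connect_sym span_rel_sym))/connect1.
by apply/existsP; exists a; rewrite !eqxx.
Qed.

Lemma to_quot_val (t : span_quot) : to_quot (val t) = t.
Proof. by apply: val_inj; apply/eqP/(valP t). Qed.

Lemma span_root_invariant (U : Type) (F : X + Y -> U) :
  (forall a, F (inl (fx a)) = F (inr (gy a))) -> forall x, F (root span_rel x) = F x.
Proof.
move=> F_span x; apply/esym/(connect_invariant _ (connect_root _ x)) => y z.
by case/existsP=> a /orP [] /andP [/eqP -> /eqP ->].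
Qed.

End SpanQuotient.

Section Morphisms.
Variable Sg : signature.
Local Notation hyp := (hyp Sg).

Lemma indeg_hom_le (G H : hyp) (f : hom G H) :
  injective (hE f) -> forall v, indeg v <= indeg (hV f v).
Proof.
move=> fE v; apply: leq_trans (leq_sum_inj (fun e => count (pred1 (hV f v)) (tgt e)) fE).
by apply: leq_sum => e _; rewrite htgt count_pred1_map.
Qed.

Lemma outdeg_hom_le (G H : hyp) (f : hom G H) :
  injective (hE f) -> forall v, outdeg v <= outdeg (hV f v).
Proof.
move=> fE v; apply: leq_trans (leq_sum_inj (fun e => count (pred1 (hV f v)) (src e)) fE).
by apply: leq_sum => e _; rewrite hsrc count_pred1_map.
Qed.

Lemma hpath_hom (G H : hyp) (f : hom G H) p v v' :
  hpath_from_to p v v' -> hpath_from_to (map (hE f) p) (hV f v) (hV f v').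
Proof.
case: p => //= e p /and3P [p_path v_src v'_tgt].
rewrite path_map hsrc last_map htgt !map_f // !andbT.
apply: sub_path p_path => e1 e2 /hasP [w w_tgt w_src] /=.
by apply/hasP; exists (hV f w); rewrite ?hsrc ?htgt map_f.
Qed.

Lemma is_ma_hom (G H : hyp) (f : hom G H) :
  injective (hE f) -> is_ma H -> is_ma G.
Proof.
move=> fE [H_acyclic H_deg]; split=> [p v | v].
  by apply/negP => /(hpath_hom f); apply/negP/H_acyclic.
have [inH outH] := H_deg (hV f v).
by split; [apply: leq_trans inH; apply: indeg_hom_le | apply: leq_trans outH; apply: outdeg_hom_le].
Qed.

Lemma mono_hcompl (G H K : hyp) (f : hom G H) (g : hom H K) :
  mono (hcomp f g) -> mono f.
Proof. by case=> gfV gfE; split=> x y fxy; [apply: gfV | apply: gfE]; rewrite /= fxy. Qed.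

Lemma convex_match_hcompl (L G H : hyp) (m : hom L G) (f : hom G H) :
  injective (hE f) -> mono m -> convex_match (hcomp m f) -> convex_match m.
Proof.
move=> fE m_mono [_ mf_convex]; split=> // x y p xy_path e e_p.
have [e0 e0E] := mf_convex x y _ (hpath_hom f xy_path) (hE f e) (map_f _ e_p).
by exists e0; apply: fE.
Qed.

Lemma ma_cospan_incl (G : hyp) : is_ma G -> ma_cospan (in_incl G) (out_incl G).
Proof.
move=> G_ma; split; [split=> // | split=> v].
- exact: card_void.
- exact: card_void.
- by split; [apply: val_inj | case].
- by split; [apply: val_inj | case].
- by split=> [v_in | [x <-]]; [exists (exist _ v v_in) | apply: valP].
- by split=> [v_out | [x <-]]; [exists (exist _ v v_out) | apply: valP].
Qed.

Lemma discrete_edgeF (G : hyp) : discrete G -> edge G -> False.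
Proof. by move=> G_disc e; have := card0_eq G_disc e; rewrite inE. Qed.

Lemma discrete_coprod (G H : hyp) : discrete G -> discrete H -> discrete (coprod G H).
Proof. by rewrite /discrete card_sum => -> ->. Qed.

Lemma factor_mono (L C D : hyp) (q : hom C D) (m : hom L D) : mono q ->
  (forall a, hV m a \in codom (hV q)) -> (forall e, hE m e \in codom (hE q)) ->
  exists u : hom L C, heq (hcomp u q) m.
Proof.
move=> [qV qE] mV mE.
pose uV a := iinv (mV a); pose uE e := iinv (mE e).
have uVK a : hV q (uV a) = hV m a := f_iinv (mV a).
have uEK e : hE q (uE e) = hE m e := f_iinv (mE e).
have u_src e : src (uE e) = map uV (src e).
  by apply: (inj_map qV); rewrite -hsrc uEK hsrc -map_comp; apply: eq_map => a /=.
have u_tgt e : tgt (uE e) = map uV (tgt e).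
  by apply: (inj_map qV); rewrite -htgt uEK htgt -map_comp; apply: eq_map => a /=.
have u_lab e : lab (uE e) = lab e by rewrite -(hlab q) uEK hlab.
by exists (Hom u_src u_tgt u_lab); split.
Qed.

End Morphisms.

Section Relabel.
Variables (Sg : signature) (G : hyp Sg) (T : finType) (phi : node G -> T).

Lemma relabel_labP (e : edge G) :
  smem (lab e) (size (map phi (src e))) (size (map phi (tgt e))).
Proof. by rewrite !size_map; apply: labP. Qed.

Definition relabel : hyp Sg :=
  @Hyp Sg T (edge G) (fun e => map phi (src e)) (fun e => map phi (tgt e)) (@lab _ G) relabel_labP.

Definition relabel_hom : hom G relabel :=
  @Hom Sg G relabel phi id (fun _ => erefl) (fun _ => erefl) (fun _ => erefl).

End Relabel.

Section JointlyEpic.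
Variable Sg : signature.
Local Notation hyp := (hyp Sg).

Definition jointly_epic (B C D : hyp) (p : hom B D) (q : hom C D) : Prop :=
  forall (X : hyp) (u1 u2 : hom D X),
    heq (hcomp p u1) (hcomp p u2) -> heq (hcomp q u1) (hcomp q u2) -> heq u1 u2.

Lemma pushout_jointly_epic (A B C D : hyp) (f : hom A B) (g : hom A C) p q :
  @is_pushout Sg A B C D f g p q -> jointly_epic p q.
Proof.
case=> [[fgV fgE] po_univ] X u1 u2 [pV pE] [qV qE].
have [|u [_ [_ u_uniq]]] := po_univ X (hcomp p u1) (hcomp q u1).
  by split=> x; [move: (fgV x) | move: (fgE x)] => /= ->.
have [u1V u1E] := u_uniq u1 (conj (fun _ => erefl) (fun _ => erefl))
                           (conj (fun _ => erefl) (fun _ => erefl)).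
have [u2V u2E] := u_uniq u2 (conj (fun v => esym (pV v)) (fun e => esym (pE e)))
                           (conj (fun v => esym (qV v)) (fun e => esym (qE e))).
by split=> x; rewrite ?u1V ?u2V ?u1E ?u2E.
Qed.

Lemma coeq_jointly_epic (A B Q : hyp) (f g : hom A B) (q : hom B Q) :
  is_coeq f g q -> jointly_epic q q.
Proof.
case=> [[fgV fgE] coeq_univ] X u1 u2 [qV qE] _.
have [|u [_ u_uniq]] := coeq_univ X (hcomp q u1).
  by split=> x; [move: (fgV x) | move: (fgE x)] => /= ->.
have [u1V u1E] := u_uniq u1 (conj (fun _ => erefl) (fun _ => erefl)).
have [u2V u2E] := u_uniq u2 (conj (fun v => esym (qV v)) (fun e => esym (qE e))).
by split=> x; rewrite ?u1V ?u2V ?u1E ?u2E.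
Qed.

Variables (B C D : hyp) (p : hom B D) (q : hom C D).
Hypothesis pq_epic : jointly_epic p q.

Definition edge_tagged : hyp :=
  @Hyp Sg (node D) (edge D * bool)%type (fun x => src x.1) (fun x => tgt x.1) (fun x => lab x.1)
      (fun x => labP x.1).

Definition tag_edges (P : pred (edge D)) : hom D edge_tagged :=
  @Hom Sg D edge_tagged id (fun e => (e, P e)) (fun e => esym (map_id _))
    (fun e => esym (map_id _)) (fun e => erefl).

Lemma jointly_epic_surjE e : (e \in codom (hE p)) || (e \in codom (hE q)).
Proof.
pose P e := (e \in codom (hE p)) || (e \in codom (hE q)).
have P_p b : P (hE p b) by rewrite /P codom_f.
have P_q c : P (hE q c) by rewrite /P codom_f orbT.
have [_ tagE] := pq_epic (u1 := tag_edges P) (u2 := tag_edges predT)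
  (conj (fun _ => erefl) (fun b => congr1 _ (P_p b)))
  (conj (fun _ => erefl) (fun c => congr1 _ (P_q c))).
by case: (tagE e) => P_e; exact: P_e.
Qed.

Lemma jointly_epic_surjV v : (v \in codom (hV p)) || (v \in codom (hV q)).
Proof.
pose P v := (v \in codom (hV p)) || (v \in codom (hV q)).
have P_p b : P (hV p b) by rewrite /P codom_f.
have P_q c : P (hV q c) by rewrite /P codom_f orbT.
have P_incident e w : w \in src e ++ tgt e -> P w.
  by case/orP: (jointly_epic_surjE e) => /codomP [x ->];
    rewrite hsrc htgt -map_cat => /mapP [y _ ->]; [apply: P_p | apply: P_q].
pose tagged := relabel (fun w : node D => (w, true)).
have tag_src e : src (e : edge tagged) = map (fun w => (w, P w)) (@src _ D e).
  by apply/eq_in_map => w w_src; rewrite (@P_incident e) // mem_cat w_src.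
have tag_tgt e : tgt (e : edge tagged) = map (fun w => (w, P w)) (@tgt _ D e).
  by apply/eq_in_map => w w_tgt; rewrite (@P_incident e) // mem_cat w_tgt orbT.
pose tag_nodes := @Hom Sg D tagged (fun w => (w, P w)) id tag_src tag_tgt (fun _ => erefl).
have [tagV _] := pq_epic (u1 := tag_nodes) (u2 := relabel_hom (fun w => (w, true)))
  (conj (fun b => congr1 _ (P_p b)) (fun _ => erefl))
  (conj (fun c => congr1 _ (P_q c)) (fun _ => erefl)).
by case: (tagV v) => P_v; exact: P_v.
Qed.

End JointlyEpic.

Lemma coeq_epi (Sg : signature) (A B Q : hyp Sg) (f g : hom A B) (q : hom B Q) :
  is_coeq f g q -> epi q.
Proof.
move/coeq_jointly_epic => q_epic; split=> [v | e];
  [case/orP: (jointly_epic_surjV q_epic v) | case/orP: (jointly_epic_surjE q_epic e)];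
  by move=> /codomP [x ->]; exists x.
Qed.

Section Pushouts.
Variable Sg : signature.
Local Notation hyp := (hyp Sg).

Lemma pushout_of_cover (A B C D : hyp) (f : hom A B) (g : hom A C)
    (p : hom B D) (q : hom C D) :
  heq (hcomp f p) (hcomp g q) -> mono p -> mono q ->
  (forall v, (v \in codom (hV p)) || (v \in codom (hV q))) ->
  (forall e, (e \in codom (hE p)) || (e \in codom (hE q))) ->
  (forall b c, hV p b = hV q c -> exists a, hV f a = b /\ hV g a = c) ->
  (forall b c, hE p b = hE q c -> exists a, hE f a = b /\ hE g a = c) ->
  is_pushout f g p q.
Proof.
move=> comm [pV pE] [qV qE] coverV coverE meetV meetE; split=> // X h k [hkV hkE].
have [uV [uVp uVq]] : exists uV : node D -> node X,
    (forall b, uV (hV p b) = hV h b) /\ (forall c, uV (hV q c) = hV k c).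
  by apply: glue_maps => // b c /meetV [a [<- <-]]; apply: hkV.
have [uE [uEp uEq]] : exists uE : edge D -> edge X,
    (forall b, uE (hE p b) = hE h b) /\ (forall c, uE (hE q c) = hE k c).
  by apply: glue_maps => // b c /meetE [a [<- <-]]; apply: hkE.
have u_src e : src (uE e) = map uV (src e).
  by case/orP: (coverE e) => /codomP [x ->]; rewrite ?uEp ?uEq !hsrc -map_comp;
    apply: eq_map => v /=; rewrite ?uVp ?uVq.
have u_tgt e : tgt (uE e) = map uV (tgt e).
  by case/orP: (coverE e) => /codomP [x ->]; rewrite ?uEp ?uEq !htgt -map_comp;
    apply: eq_map => v /=; rewrite ?uVp ?uVq.
have u_lab e : lab (uE e) = lab e.
  by case/orP: (coverE e) => /codomP [x ->]; rewrite ?uEp ?uEq !hlab.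
exists (Hom u_src u_tgt u_lab); do 2 (split; first by split).
move=> u' [u'pV u'pE] [u'qV u'qE]; split=> x;
  [case/orP: (coverV x) | case/orP: (coverE x)] => /codomP [y ->] /=;
  rewrite ?uVp ?uVq ?uEp ?uEq; [exact: u'pV | exact: u'qV | exact: u'pE | exact: u'qE].
Qed.

Section PushoutMono.
Variables (A B C : hyp) (f : hom A B) (g : hom A C).
Hypothesis f_mono : mono f.

Local Notation graftV := (extend_along (hV f) (hV g)).
Local Notation graftE := (extend_along (hE f) (hE g)).

(* [B] with the image of [f] replaced by [C]: the pushout of [f] and [g]. *)
Definition graft_src (x : edge C + edge B) : seq (node C + node B) :=
  match x with inl e => map inl (src e) | inr e => map graftV (src e) end.
Definition graft_tgt (x : edge C + edge B) : seq (node C + node B) :=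
  match x with inl e => map inl (tgt e) | inr e => map graftV (tgt e) end.
Definition graft_lab (x : edge C + edge B) : slabel Sg :=
  match x with inl e => lab e | inr e => lab e end.
Lemma graft_labP x : smem (graft_lab x) (size (graft_src x)) (size (graft_tgt x)).
Proof. by case: x => e /=; rewrite !size_map; apply: labP. Qed.
Definition graft : hyp :=
  @Hyp Sg (node C + node B)%type (edge C + edge B)%type graft_src graft_tgt graft_lab graft_labP.

Lemma graft_hsrc e : src (graftE e : edge graft) = map graftV (src e).
Proof.
rewrite {1}/extend_along; case: pickP => [a /eqP <- | _] //=.
by rewrite !hsrc -!map_comp; apply: eq_map => v /=; rewrite extend_along_im //; case: f_mono.
Qed.
Lemma graft_htgt e : tgt (graftE e : edge graft) = map graftV (tgt e).
Proof.
rewrite {1}/extend_along; case: pickP => [a /eqP <- | _] //=.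
by rewrite !htgt -!map_comp; apply: eq_map => v /=; rewrite extend_along_im //; case: f_mono.
Qed.
Lemma graft_hlab e : lab (graftE e : edge graft) = lab e.
Proof. by rewrite /extend_along; case: pickP => [a /eqP <- | _] //=; rewrite !hlab. Qed.

Definition graft_l : hom B graft := Hom graft_hsrc graft_htgt graft_hlab.
Definition graft_r : hom C graft :=
  @Hom Sg C graft inl inl (fun _ => erefl) (fun _ => erefl) (fun _ => erefl).

Lemma pushout_mono (D : hyp) (p : hom B D) (q : hom C D) :
  is_pushout f g p q -> mono q.
Proof.
have [fV fE] := f_mono.
case=> _ /(_ graft graft_l graft_r) [|u [_ [[uqV uqE] _]]].
  by split=> x /=; rewrite extend_along_im.
by split=> x y qxy; [move: (uqV x) (uqV y) | move: (uqE x) (uqE y)] => /=;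
  by rewrite qxy => -> [].
Qed.
End PushoutMono.

Section PushoutConstruction.
Variables (A B C : hyp) (f : hom A B) (g : hom A C).

Local Notation toV := (to_quot (hV f) (hV g)).
Local Notation toE := (to_quot (hE f) (hE g)).

Local Notation BC := (coprod B C).

Lemma to_quot_src (x : edge BC) :
  map toV (@src _ BC (root (span_rel (hE f) (hE g)) x)) = map toV (src x).
Proof.
apply: (span_root_invariant (F := fun x : edge BC => map toV (src x))) => a /=.
by rewrite !hsrc -!map_comp; apply: eq_map => v /=; apply: to_quot_span.
Qed.

Lemma to_quot_tgt (x : edge BC) :
  map toV (@tgt _ BC (root (span_rel (hE f) (hE g)) x)) = map toV (tgt x).
Proof.
apply: (span_root_invariant (F := fun x : edge BC => map toV (tgt x))) => a /=.
by rewrite !htgt -!map_comp; apply: eq_map => v /=; apply: to_quot_span.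
Qed.

Lemma to_quot_lab (x : edge BC) : @lab _ BC (root (span_rel (hE f) (hE g)) x) = lab x.
Proof. by apply: (span_root_invariant (F := fun x : edge BC => lab x)) => a /=; rewrite !hlab. Qed.

Lemma pushout_labP (t : span_quot (hE f) (hE g)) :
  smem (@lab _ BC (val t)) (size (map toV (@src _ BC (val t))))
       (size (map toV (@tgt _ BC (val t)))).
Proof. by rewrite !size_map; apply: labP. Qed.

Definition pushout_hyp : hyp :=
  @Hyp Sg (span_quot (hV f) (hV g)) (span_quot (hE f) (hE g))
    (fun t => map toV (@src _ BC (val t))) (fun t => map toV (@tgt _ BC (val t)))
    (fun t => @lab _ BC (val t)) pushout_labP.

Definition to_pushout : hom BC pushout_hyp :=
  @Hom Sg BC pushout_hyp toV toE (fun x => to_quot_src x) (fun x => to_quot_tgt x)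
    (fun x => to_quot_lab x).

Definition pushout_l : hom B pushout_hyp := hcomp (inj1 B C) to_pushout.
Definition pushout_r : hom C pushout_hyp := hcomp (inj2 B C) to_pushout.

Lemma pushout_hypP : is_pushout f g pushout_l pushout_r.
Proof.
split; first by split=> a; apply: to_quot_span.
move=> X h k [hkV hkE]; pose hk := copair h k.
have hk_rootV x : hV hk (root (span_rel (hV f) (hV g)) x) = hV hk x.
  by apply: span_root_invariant => a; apply: hkV.
have hk_rootE x : hE hk (root (span_rel (hE f) (hE g)) x) = hE hk x.
  by apply: span_root_invariant => a; apply: hkE.
have u_src (t : edge pushout_hyp) : src (hE hk (val t)) = map (fun y => hV hk (val y)) (src t).
  by rewrite hsrc -map_comp; apply: eq_map => x; apply/esym/hk_rootV.
have u_tgt (t : edge pushout_hyp) : tgt (hE hk (val t)) = map (fun y => hV hk (val y)) (tgt t).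
  by rewrite htgt -map_comp; apply: eq_map => x; apply/esym/hk_rootV.
exists (Hom u_src u_tgt (fun t => hlab hk (val t))).
split; first by split=> x; [apply: (hk_rootV (inl x)) | apply: (hk_rootE (inl x))].
split; first by split=> x; [apply: (hk_rootV (inr x)) | apply: (hk_rootE (inr x))].
move=> u' [u'V u'E] [u'V' u'E']; split=> t; move: (val t) (to_quot_val t) => x <-.
  by apply: etrans (esym (hk_rootV x)); case: x => y; [apply: u'V | apply: u'V'].
by apply: etrans (esym (hk_rootE x)); case: x => y; [apply: u'E | apply: u'E'].
Qed.

End PushoutConstruction.

End Pushouts.

Section NodeGluingCoeq.
Variable Sg : signature.
Local Notation hyp := (hyp Sg).

Lemma coeq_disc_edge_inj (T : finType) (B Q : hyp) (f g : hom (disc Sg T) B) (q : hom B Q) :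
  is_coeq f g q -> injective (hE q).
Proof.
case=> [[fgV _] coeq_univ].
have [|u [[_ quE] _]] := coeq_univ _ (relabel_hom (hV q)).
  by split=> [x | []]; apply: fgV.
by move=> e e' qee'; move: (quE e) (quE e') => /=; rewrite qee' => -> .
Qed.

Variables (S S' : hyp) (N : {set node S * node S}) (q : hom S S').
Hypothesis q_coeq : is_coeq (gq1 N) (gq2 N) q.
Hypothesis N_disjoint : forall p p', p \in N -> p' \in N -> p <> p' ->
  [/\ p.1 <> p'.1, p.1 <> p'.2, p.2 <> p'.1 & p.2 <> p'.2].

Definition collapse (v : node S) : node S :=
  if [pick p in N | p.2 == v] is Some p then p.1 else v.

Lemma collapseP v :
  (collapse v = v /\ forall p, p \in N -> p.2 <> v) \/
  exists2 p, p \in N & p.2 = v /\ collapse v = p.1.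
Proof.
rewrite /collapse; case: pickP => [p /andP [p_N /eqP p2v] | no_p]; first by right; exists p.
by left; split=> // p p_N p2v; have := no_p p; rewrite p_N p2v eqxx.
Qed.

Lemma collapse_glued p : p \in N -> collapse p.1 = collapse p.2.
Proof.
move=> p_N.
have -> : collapse p.2 = p.1.
  case: (collapseP p.2) => [[_ /(_ p p_N)] // | [p' p'_N [p'2 ->]]].
  by case: (p' =P p) => [-> // | ne]; case: (N_disjoint p'_N p_N ne).
case: (collapseP p.1) => [[-> //] | [p' p'_N [p'2 ->]]].
by case: (p' =P p) => [-> // | ne]; case: (N_disjoint p'_N p_N ne) => _ _ /(_ p'2).
Qed.

Lemma coeq_gluing_node a b :
  hV q a = hV q b -> [\/ a = b, (a, b) \in N | (b, a) \in N].
Proof.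
case: q_coeq => _ /(_ _ (relabel_hom collapse)) [|u [[quV _] _]].
  by split=> [[p p_N] | []]; apply: collapse_glued.
move=> qab; have : collapse a = collapse b by move: (quV a) (quV b) => /=; rewrite qab => <-.
case: (collapseP a) => [[-> _] | [pa pa_N [pa2 ->]]];
  case: (collapseP b) => [[-> _] | [pb pb_N [pb2 ->]]].
- by move=> ->; constructor 1.
- by move=> ab; constructor 2; rewrite ab -pb2 -surjective_pairing.
- by move=> ba; constructor 3; rewrite -ba -pa2 -surjective_pairing.
- move=> pab; case: (pa =P pb) => [pa_pb | ne]; last by case: (N_disjoint pa_N pb_N ne).
  by constructor 1; rewrite -pa2 -pb2 pa_pb.
Qed.

End NodeGluingCoeq.

Lemma node_gluing_boundary (Sg : signature) (L1 L2 S S' : hyp Sg)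
    (eps : hom (coprod L1 L2) S) (N : {set node S * node S}) (q : hom S S') :
  valid_node_gluing eps N -> is_coeq (gq1 N) (gq2 N) q ->
  forall a b, hV q a = hV q b -> a = b \/ b \in inset S :|: outset S.
Proof.
move=> [N_sub N_disjoint] q_coeq a b.
have N_io : N \subset setX (inset S) (outset S).
  by case: N_sub => /subset_trans -> //; apply: setXS; apply: subsetIl.
move/(coeq_gluing_node q_coeq N_disjoint) => [| ab | ba]; [by left | right ..].
- by move/(subsetP N_io): ab; rewrite in_setX in_setU => /andP [_ ->]; rewrite orbT.
- by move/(subsetP N_io): ba; rewrite in_setX in_setU => /andP [->].
Qed.

Section PushoutComplement.
Variable Sg : signature.
Local Notation hyp := (hyp Sg).
Variables (K L S : hyp) (l : hom K L) (m : hom L S).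
Hypothesis K_discrete : discrete K.
Hypothesis inset_im : forall a, a \in inset L -> a \in codom (hV l).
Hypothesis outset_im : forall a, a \in outset L -> a \in codom (hV l).
Hypothesis m_mono : mono m.
Hypothesis S_deg : forall v : node S, indeg v <= 1 /\ outdeg v <= 1.

Definition compl_node (v : node S) : bool :=
  (v \notin codom (hV m)) || (v \in codom (hV m \o hV l)).
Definition compl_edge (e : edge S) : bool := e \notin codom (hE m).

Lemma compl_node_im a : compl_node (hV m a) -> a \in codom (hV l).
Proof. by rewrite /compl_node codom_f => /codomP [i /(proj1 m_mono) ->]; apply: codom_f. Qed.

Lemma compl_node_l a : a \in codom (hV l) -> compl_node (hV m a).
Proof. by case/codomP=> i ->; rewrite /compl_node (codom_f (hV m \o hV l)) orbT. Qed.

Lemma boundary_im a : hV m a \in inset S :|: outset S -> a \in codom (hV l).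
Proof.
have [mV mE] := m_mono.
rewrite in_setU !inE => /orP [] /eqP deg0; [apply: inset_im | apply: outset_im];
  rewrite inE -leqn0 -deg0; [exact: indeg_hom_le | exact: outdeg_hom_le].
Qed.

Lemma compl_node_boundary v : v \in inset S :|: outset S -> compl_node v.
Proof.
move=> v_bd; case: (boolP (v \in codom (hV m))) => [/codomP [a v_ma] | v_m].
  by rewrite v_ma in v_bd *; apply/compl_node_l/boundary_im.
by rewrite /compl_node v_m.
Qed.

(* The dangling condition, which holds because [S] is monogamous. *)
Lemma matched_src_im e a : compl_edge e -> hV m a \in src e -> a \in codom (hV l).
Proof.
move=> e_compl ma_e; apply: outset_im; rewrite inE; apply: contraT => /sum_count_neq0 [e0 a_e0].
have e0_e : hE m e0 != e by apply: contraNneq e_compl => <-; apply: codom_f.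
have ma_e0 : hV m a \in src (hE m e0) by rewrite hsrc map_f.
by have := sum_count_gt1 e0_e ma_e0 ma_e; rewrite ltnNge (S_deg _).2.
Qed.

Lemma matched_tgt_im e a : compl_edge e -> hV m a \in tgt e -> a \in codom (hV l).
Proof.
move=> e_compl ma_e; apply: inset_im; rewrite inE; apply: contraT => /sum_count_neq0 [e0 a_e0].
have e0_e : hE m e0 != e by apply: contraNneq e_compl => <-; apply: codom_f.
have ma_e0 : hV m a \in tgt (hE m e0) by rewrite htgt map_f.
by have := sum_count_gt1 e0_e ma_e0 ma_e; rewrite ltnNge (S_deg _).1.
Qed.

Lemma compl_edge_incident e v : compl_edge e -> v \in src e ++ tgt e -> compl_node v.
Proof.
move=> e_compl v_e; case: (boolP (v \in codom (hV m))) => [/codomP [a v_ma] | v_m].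
  rewrite v_ma mem_cat in v_e *; apply: compl_node_l.
  by case/orP: v_e; [apply: matched_src_im | apply: matched_tgt_im].
by rewrite /compl_node v_m.
Qed.

Local Notation cV := {v : node S | compl_node v}.
Local Notation cE := {e : edge S | compl_edge e}.

Definition compl_src (e : cE) : seq cV := pmap insub (src (val e)).
Definition compl_tgt (e : cE) : seq cV := pmap insub (tgt (val e)).

Lemma compl_src_val e : map val (compl_src e) = src (val e).
Proof.
apply/map_val_pmap_insub/allP => v v_src.
by apply: (compl_edge_incident (valP e)); rewrite mem_cat v_src.
Qed.

Lemma compl_tgt_val e : map val (compl_tgt e) = tgt (val e).
Proof.
apply/map_val_pmap_insub/allP => v v_tgt.
by apply: (compl_edge_incident (valP e)); rewrite mem_cat v_tgt orbT.
Qed.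

Lemma compl_labP e : smem (lab (val e)) (size (compl_src e)) (size (compl_tgt e)).
Proof.
by rewrite -(size_map val (compl_src e)) -(size_map val (compl_tgt e))
  compl_src_val compl_tgt_val; apply: labP.
Qed.

Definition compl : hyp := @Hyp Sg cV cE compl_src compl_tgt (fun e => lab (val e)) compl_labP.

Definition compl_incl : hom compl S :=
  @Hom Sg compl S val val (fun e => esym (compl_src_val e)) (fun e => esym (compl_tgt_val e))
    (fun _ => erefl).

Let no_K_edge := discrete_edgeF K_discrete.

Definition compl_iface : hom K compl :=
  @Hom Sg K compl (fun i => exist _ (hV m (hV l i)) (compl_node_l (codom_f _ i)))
    (fun e => match no_K_edge e with end) (fun e => match no_K_edge e with end)
    (fun e => match no_K_edge e with end) (fun e => match no_K_edge e with end).

Lemma compl_pushout : is_pushout l compl_iface m compl_incl.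
Proof.
apply: pushout_of_cover => //.
- by split; apply: val_inj.
- move=> v; case: (boolP (v \in codom (hV m))) => //= v_m.
  have v_compl : compl_node v by rewrite /compl_node v_m.
  exact: (codom_f (hV compl_incl) (exist _ v v_compl)).
- move=> e; case: (boolP (e \in codom (hE m))) => //= e_m.
  exact: (codom_f (hE compl_incl) (exist _ e e_m)).
- move=> b c mb_c; have /codomP [i b_i] : b \in codom (hV l).
    by apply: compl_node_im; rewrite mb_c; apply: valP.
  by exists i; split; [rewrite b_i | apply: val_inj; rewrite /= -b_i; exact: mb_c].
- by move=> b c mb_c; have := valP c; rewrite /compl_edge -(mb_c : _ = val c) codom_f.
Qed.

Hypothesis l_mono : mono l.

(* A node of [S] that [q] glues to a matched node [m b] is either [m b] itself,
   which then lies in the complement, or [m b] is on the boundary of [S]; in both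
   cases [b] is an interface node, so nothing outside the complement is hit. *)
Lemma compl_factor_hcomp (S' C' : hyp) (q : hom S S') (k' : hom K C') (c' : hom C' S') :
  injective (hE q) ->
  (forall a b, hV q a = hV q b -> a = b \/ b \in inset S :|: outset S) ->
  is_pushout l k' (hcomp m q) c' ->
  forall (L' : hyp) (mt : hom L' S) (u : hom L' compl), heq (hcomp u compl_incl) mt ->
  exists u' : hom L' C', heq (hcomp u' c') (hcomp mt q).
Proof.
move=> qE q_glue po L' mt u [uV uE].
have [[commV _] _] := po.
have po_epic := pushout_jointly_epic po.
apply: factor_mono (pushout_mono l_mono po) _ _ => [a | e].
- case/orP: (jointly_epic_surjV po_epic (hV q (hV mt a))) => // /codomP [b mta_b].
  have /codomP [i b_i] : b \in codom (hV l).
    case: (q_glue _ _ mta_b) => [mt_m | /boundary_im //].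
    by apply: compl_node_im; rewrite -mt_m -uV; apply: valP.
  by apply/codomP; exists (hV k' i); rewrite /= mta_b b_i; apply: commV.
- case/orP: (jointly_epic_surjE po_epic (hE q (hE mt e))) => // /codomP [b /qE mte_b].
  by have := valP (hE u e); rewrite /compl_edge (uE e : val _ = _) mte_b codom_f.
Qed.

End PushoutComplement.

Section RuleComplement.
Variable Sg : signature.
Local Notation hyp := (hyp Sg).
Variables (r : rule Sg) (S : hyp) (m : hom (rL r) S).
Hypothesis r_lc : left_connected_rule r.
Hypothesis S_ma : is_ma S.
Hypothesis m_mono : mono m.

Local Notation l := (copair (riL r) (roL r)).

Let K_discrete : discrete (coprod (rI r) (rO r)).
Proof. by case: r_lc => [[I_disc O_disc _ _ _] _]; apply: discrete_coprod. Qed.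

Let l_mono : mono l.
Proof. by case: r_lc => [[]]. Qed.

Let inset_im a : a \in inset (rL r) -> a \in codom (hV l).
Proof.
by case: r_lc => [[_ _ [_ [iL_cover _]] _ _] _] /iL_cover [x <-]; apply: (codom_f (hV l) (inl x)).
Qed.

Let outset_im a : a \in outset (rL r) -> a \in codom (hV l).
Proof.
by case: r_lc => [[_ _ [_ [_ oL_cover]] _ _] _] /oL_cover [x <-]; apply: (codom_f (hV l) (inr x)).
Qed.

Let S_deg := S_ma.2.

Local Notation C := (compl m inset_im outset_im S_deg).

Let compl_node_inset v : v \in inset S -> compl_node l m v.
Proof. by move=> v_in; apply: compl_node_boundary => //; rewrite in_setU v_in. Qed.

Let compl_node_outset v : v \in outset S -> compl_node l m v.
Proof. by move=> v_out; apply: compl_node_boundary => //; rewrite in_setU v_out orbT. Qed.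

Local Notation k := (compl_iface m K_discrete inset_im outset_im S_deg).
Local Notation c := (compl_incl m inset_im outset_im S_deg).

Definition compl_in : hom (disc Sg {v : node S | v \in inset S}) C :=
  disc_hom (fun v => exist _ (val v) (compl_node_inset (valP v)) : node C).
Definition compl_out : hom (disc Sg {v : node S | v \in outset S}) C :=
  disc_hom (fun v => exist _ (val v) (compl_node_outset (valP v)) : node C).

Lemma compl_in_incl : heq (hcomp compl_in c) (in_incl S).
Proof. by split=> [| []]. Qed.
Lemma compl_out_incl : heq (hcomp compl_out c) (out_incl S).
Proof. by split=> [| []]. Qed.

Definition compl_derivation (m_convex : convex_match m) :
    derivation (in_incl S) (out_incl S) m :=
  {| dC := C; dk := k; dc := c;
     dT := pushout_hyp (copair (riR r) (roR r)) k;
     dr := pushout_l (copair (riR r) (roR r)) k;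
     dd := pushout_r (copair (riR r) (roR r)) k;
     dn := compl_in; dm := compl_out;
     d_convex := m_convex;
     d_po1 := compl_pushout K_discrete inset_im outset_im m_mono S_deg;
     d_po2 := pushout_hypP (copair (riR r) (roR r)) k;
     d_n := compl_in_incl; d_m := compl_out_incl |}.

Lemma compl_derivation_factor (m_convex : convex_match m) (S' n0 m0 : hyp) (q : hom S S')
    (iS : hom n0 S') (oS : hom m0 S') (D' : derivation iS oS (hcomp m q)) :
  injective (hE q) ->
  (forall a b, hV q a = hV q b -> a = b \/ b \in inset S :|: outset S) ->
  forall (L' : hyp) (mt : hom L' S) (u : hom L' (dC (compl_derivation m_convex))),
    heq (hcomp u (dc (compl_derivation m_convex))) mt ->
  exists u' : hom L' (dC D'), heq (hcomp u' (dc D')) (hcomp mt q).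
Proof. by move=> qE q_glue; apply: compl_factor_hcomp => //; apply: d_po1. Qed.

End RuleComplement.

Lemma yields_cp_reflect (Sg : signature) (r1 r2 : rule Sg) (S S' : hyp Sg) (q : hom S S')
    (m1 : hom (rL r1) S) (m2 : hom (rL r2) S) :
  left_connected_rule r1 -> left_connected_rule r2 ->
  injective (hE q) -> (forall a b, hV q a = hV q b -> a = b \/ b \in inset S :|: outset S) ->
  epi (copair m1 m2) ->
  yields_cp (hcomp m1 q) (hcomp m2 q) -> yields_cp m1 m2.
Proof.
move=> r1_lc r2_lc qE q_glue m_epi
  [m1q_mono m2q_mono [[_ _ S'_ma _ _] _] [_ [_ [D1' [D2' not_parallel]]]]].
have S_ma := is_ma_hom qE S'_ma.
have m1_mono := mono_hcompl m1q_mono; have m2_mono := mono_hcompl m2q_mono.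
have S_cospan := ma_cospan_incl S_ma.
do 3 split=> //.
exists (compl_derivation r1_lc S_ma m1_mono (convex_match_hcompl qE m1_mono (d_convex D1'))).
exists (compl_derivation r2_lc S_ma m2_mono (convex_match_hcompl qE m2_mono (d_convex D2'))).
case=> [[u1 u1_m1] [u2 u2_m2]]; apply: not_parallel; split.
- exact: compl_derivation_factor D2' qE q_glue _ _ _ u1_m1.
- exact: compl_derivation_factor D1' qE q_glue _ _ _ u2_m2.
Qed.

Lemma epi_copair_inj (Sg : signature) (G H K : hyp Sg) (q : hom (coprod G H) K) :
  epi q -> epi (copair (hcomp (inj1 G H) q) (hcomp (inj2 G H) q)).
Proof.
by case=> qV qE; split=> y; [have [x <-] := qV y | have [x <-] := qE y]; exists x; case: x.
Qed.

Unset Implicit Arguments.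

Theorem mainTheorem8 (Sg : signature) (rs : seq (rule Sg)) (ri rj : rule Sg) :
  left_connected_system rs ->
  Stdlib.Lists.List.In ri rs -> Stdlib.Lists.List.In rj rs ->
  forall (M : {set edge (rL ri) * edge (rL rj)}) (HM : valid_edge_gluing M)
         (S : hyp Sg) (eps : hom (coprod (rL ri) (rL rj)) S),
    is_coeq (hcomp (gp1 HM) (inj1 (rL ri) (rL rj)))
            (hcomp (gp2 HM) (inj2 (rL ri) (rL rj))) eps ->
  forall (N : {set node S * node S}),
    valid_node_gluing eps N ->
  forall (S' : hyp Sg) (eps' : hom S S'),
    is_coeq (gq1 N) (gq2 N) eps' ->
    yields_cp (hcomp (hcomp (inj1 (rL ri) (rL rj)) eps) eps')
                 (hcomp (hcomp (inj2 (rL ri) (rL rj)) eps) eps') ->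
    yields_cp (hcomp (inj1 (rL ri) (rL rj)) eps)
                (hcomp (inj2 (rL ri) (rL rj)) eps).
Proof.
move=> rs_lc ri_rs rj_rs M HM S eps eps_coeq N N_gluing S' eps' eps'_coeq.
apply: yields_cp_reflect.
- exact: rs_lc.
- exact: rs_lc.
- exact: coeq_disc_edge_inj eps'_coeq.
- exact: node_gluing_boundary N_gluing eps'_coeq.
- exact/epi_copair_inj/coeq_epi/eps_coeq.
Qed.
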